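(* Let $G=(V,E)$ be an undirected graph with $n$ vertices in which every vertex has degree at most $d$, and let $\pi$ be a uniformly random ordering of $V$. (i) For a $\delta$-prefix $P$ with $\delta=O(\log(n)/d)$, the longest directed path in the priority DAG of $G[P]$ has length $O(\log n)$ with high probability. (ii) For a $\delta$-prefix $P$ with $\delta\le 1/d$, the longest directed path in the priority DAG of $G[P]$ has length $O(\log n/\log\log n)$ with high probability.
   Context: For $0<\delta\le1$, the $\delta$-prefix of $V$ with respect to $\pi$ is the set of the $\delta|V|$ earliest vertices in $\pi$; $G[P]$ is the induced subgraph. The priority DAG directs each edge from its earlier endpoint to its later endpoint in $\pi$. ''With high probability'' means with probability at least $1-1/n^{c}$ for any constant $c$, affecting the constants in the asymptotic notation. *)

From HB Require Import structures.
From mathcomp Require Import all_boot all_order all_algebra.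
From mathcomp Require Import fingroup perm.
From mathcomp Require Import reals exp.
Set Implicit Arguments. Unset Strict Implicit. Unset Printing Implicit Defensive.
Import Order.TTheory GRing.Theory Num.Theory.
Local Open Scope ring_scope.

Section Defs.
Variable R : realType.

Definition simple_graph n (e : rel 'I_n) : Prop := symmetric e /\ irreflexive e.

Definition max_degree_le n (e : rel 'I_n) (d : nat) : Prop :=
  forall v : 'I_n, (#|[set u | e v u]| <= d)%N.

(* An ordering pi of V: vertex v is at position pi v (0-based); smaller = earlier. *)
(* delta-prefix: the floor(delta*n) earliest vertices in pi. *)
Definition delta_prefix n (pi : {perm 'I_n}) (delta : R) : {set 'I_n} :=
  [set v | ((pi v).+1)%:R <= delta * n%:R].

Definition priority_edge n (e : rel 'I_n) (pi : {perm 'I_n}) (P : {set 'I_n}) :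
  rel 'I_n := fun u v => [&& u \in P, v \in P, e u v & (pi u < pi v)%N].

Definition has_dpath n (e : rel 'I_n) (pi : {perm 'I_n}) (P : {set 'I_n}) (k : nat)
  : bool :=
  [exists t : (k.+1).-tuple 'I_n,
     (thead t \in P) && path (priority_edge e pi P) (thead t) (behead t)].

(* length (number of edges) of the longest directed path; a directed path has
   at most n vertices since pi strictly increases along it. *)
Definition longest_dpath n (e : rel 'I_n) (pi : {perm 'I_n}) (P : {set 'I_n}) : nat :=
  (\max_(k < n) (if has_dpath e pi P k then nat_of_ord k else 0))%N.

Definition prob_perm n (A : pred {perm 'I_n}) : R :=
  #|[set pi | A pi]|%:R / #|{perm 'I_n}|%:R.

End Defs.

From HB Require Import structures.
From mathcomp Require Import all_boot all_order all_algebra.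
From mathcomp Require Import fingroup perm.
From mathcomp Require Import reals sequences exp.
From mathcomp Require Import zify ring lra.
Set Implicit Arguments. Unset Strict Implicit. Unset Printing Implicit Defensive.
Import Order.TTheory GRing.Theory Num.Theory.

(* A directed path with K edges in the priority DAG of G[P] is a walk
   v_0 ... v_K of G that the random ordering maps onto K+1 increasing positions
   of the prefix. There are at most n d^K walks, and a fixed one is mapped onto
   an increasing (K+1)-subset of the first delta n positions with probability at
   most delta^(K+1) / (K+1)!, so the longest path has K edges with probability
   at most n (d delta)^K / K! <= n (e d delta / K)^K. If d delta <= C1 ln n and
   K > (e^2 C1 + 1 + c) ln n this is at most n e^-K <= n^-c; if d delta <= 1 and
   K > (e + 2 + 2c) ln n / ln ln n, then K ln (K / e) >= (1 + c) ln n gives the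
   same bound. *)

Lemma leq_card_bigcup (I T : finType) (P : pred I) (F : I -> {set T}) :
  #|\bigcup_(i | P i) F i| <= \sum_(i | P i) #|F i|.
Proof.
elim/big_rec2: _ => [|i m U _ leUm]; first by rewrite cards0.
by rewrite (leq_trans (leq_card_setU _ U).1) ?leq_add2l.
Qed.

Lemma path_all_dom (T : Type) (r : rel T) (a : pred T) x s :
  (forall u v, r u v -> a v) -> path r x s -> all a s.
Proof.
move=> ra; elim: s x => [//|y s IHs] x /= /andP[rxy pys].
by rewrite (ra _ _ rxy) (IHs _ pys).
Qed.

Section Counting.
Variable T : finType.

(* The permutations sending [t] to [q] form a coset of the pointwise
   stabiliser of [q], whose elements permute the other [#|T| - k] points. *)
Lemma card_perm_map_tuple k (t q : k.-tuple T) : uniq q ->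
  #|[set pi : {perm T} | map_tuple pi t == q]| <= (#|T| - k)`!.
Proof.
move=> uq; set A := [set pi : {perm T} | _].
have [->|[pi0 Api0]] := set_0Vmem A; first by rewrite cards0.
rewrite inE in Api0.
have <- : #|~: [set x in q]| = #|T| - k.
  by rewrite cardsCs setCK cardsE (card_uniqP uq) size_tuple.
rewrite -(card_imset _ (mulgI pi0^-1)%g) -card_perm.
apply: subset_leq_card; apply/subsetP => _ /imsetP[pi Api ->].
rewrite inE in Api; apply/subsetP => x; rewrite !inE /=; apply: contraNN => qx.
have Et0 : map pi0 t = q := congr1 val (eqP Api0).
have Et1 : map pi t = q := congr1 val (eqP Api).
have/eq_in_map Et : map pi t = map pi0 t by rewrite Et0 Et1.
have/mapP[y ty ->] : x \in map pi0 t by rewrite Et0.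
by rewrite permM permK Et.
Qed.

Variables (e : rel T) (d : nat).
Hypothesis deg_e : forall v, #|[set u | e v u]| <= d.

Lemma card_walks_from k x : #|[set s : k.-tuple T | path e x s]| <= d ^ k.
Proof.
elim: k x => [|k IHk] x.
  by rewrite (leq_trans (max_card _)) ?card_tuple.
have sub : [set s : k.+1.-tuple T | path e x s] \subset
    \bigcup_(y in [set u | e x u])
      [set cons_tuple y s | s in [set s : k.-tuple T | path e y s]].
  apply/subsetP => /tupleP[y s]; rewrite inE /= => /andP[exy pys].
  by apply/bigcupP; exists y; rewrite ?inE //; apply/imsetP; exists s; rewrite ?inE.
rewrite (leq_trans (subset_leq_card sub)) ?(leq_trans (leq_card_bigcup _ _)) //.
apply: (@leq_trans (\sum_(y in [set u | e x u]) d ^ k)).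
  by apply: leq_sum => y _; exact: leq_trans (leq_imset_card _ _) (IHk y).
by rewrite sum_nat_const expnS leq_mul2r deg_e orbT.
Qed.

Lemma card_walks k :
  #|[set t : k.+1.-tuple T | path e (thead t) (behead t)]| <= #|T| * d ^ k.
Proof.
have sub : [set t : k.+1.-tuple T | path e (thead t) (behead t)] \subset
    \bigcup_(y : T) [set cons_tuple y s | s in [set s : k.-tuple T | path e y s]].
  apply/subsetP => /tupleP[y s]; rewrite inE /= => pys.
  by apply/bigcupP; exists y => //; apply/imsetP; exists s; rewrite ?inE.
rewrite (leq_trans (subset_leq_card sub)) ?(leq_trans (leq_card_bigcup _ _)) //.
apply: (@leq_trans (\sum_(y : T) d ^ k)); last by rewrite sum_nat_const.
by apply: leq_sum => y _; exact: leq_trans (leq_imset_card _ _) (card_walks_from k y).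
Qed.

End Counting.

Lemma card_sorted_tuples disp (T : finPOrderType disp) k (S : {set T}) :
  #|[set q : k.-tuple T | sorted <%O q && all [in S] q]| <= 'C(#|S|, k).
Proof.
rewrite -cards_draws; set Q := [set q : k.-tuple T | _].
have inj : {in Q &, injective (fun q : k.-tuple T => [set x in q])}.
  move=> q1 q2; rewrite !inE => /andP[s1 _] /andP[s2 _] /setP E.
  by apply: val_inj; apply: lt_sorted_eq s1 s2 _ => x; have := E x; rewrite !inE.
rewrite -(card_in_imset inj); apply: subset_leq_card.
apply/subsetP => B /imsetP[q + ->{B}]; rewrite !inE => /andP[sq /allP qS].
rewrite cardsE (card_uniqP (lt_sorted_uniq sq)) size_tuple eqxx andbT.
by apply/subsetP => x; rewrite inE => /qS.
Qed.

(* A priority path [t] of [K] edges inside [pi^-1 S] is an [e]-walk that [pi]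
   maps onto an increasing [K.+1]-tuple of elements of [S]. *)
Lemma card_has_dpath n (e : rel 'I_n) d (S : {set 'I_n}) K : max_degree_le e d ->
  #|[set pi : {perm 'I_n} | has_dpath e pi [set v | pi v \in S] K]|
    <= n * d ^ K * 'C(#|S|, K.+1) * (n - K.+1)`!.
Proof.
move=> de.
set W := [set t : K.+1.-tuple 'I_n | path e (thead t) (behead t)].
set Q := [set q : K.+1.-tuple 'I_n | sorted <%O q && all [in S] q].
have sub : [set pi : {perm 'I_n} | has_dpath e pi [set v | pi v \in S] K] \subset
    \bigcup_(t in W) \bigcup_(q in Q) [set pi : {perm 'I_n} | map_tuple pi t == q].
  apply/subsetP => pi; rewrite inE => /existsP[t /andP[]].
  case/tupleP: t => x s /= Px pxs; apply/bigcupP; exists [tuple of x :: s].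
    by rewrite inE /=; apply: sub_path pxs => u v /and4P[].
  apply/bigcupP; exists (map_tuple pi [tuple of x :: s]); last by rewrite inE.
  rewrite inE /= path_map; apply/andP; split.
    by apply: sub_path pxs => u v /and4P[].
  rewrite inE in Px; rewrite all_map /= Px /=.
  by apply: path_all_dom pxs => u v /and4P[_]; rewrite inE.
rewrite (leq_trans (subset_leq_card sub)) ?(leq_trans (leq_card_bigcup _ _)) //.
apply: (@leq_trans (\sum_(t in W) #|Q| * (n - K.+1)`!)).
  apply: leq_sum => t _; rewrite (leq_trans (leq_card_bigcup _ _)) //.
  rewrite -sum_nat_const; apply: leq_sum => q; rewrite inE => /andP[sq _].
  by have := card_perm_map_tuple t (lt_sorted_uniq sq); rewrite card_ord.
rewrite sum_nat_const mulnA leq_mul2r leq_mul ?orbT //.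
  by have := card_walks de K; rewrite card_ord.
exact: card_sorted_tuples.
Qed.

Lemma has_dpath_le n (e : rel 'I_n) pi P k K : K <= k ->
  has_dpath e pi P k -> has_dpath e pi P K.
Proof.
move=> Kk /existsP[+ /andP[]]; case/tupleP => x s /= Px pxs.
have sz : size (x :: take K s) == K.+1 by rewrite /= size_takel // size_tuple.
by apply/existsP; exists (Tuple sz); rewrite /thead /tnth /= Px take_path.
Qed.

Lemma has_dpath_longest n (e : rel 'I_n) pi P K : 0 < K ->
  K <= longest_dpath e pi P -> has_dpath e pi P K.
Proof.
move=> K0; apply: contraTT => noK; rewrite -ltnNge -(prednK K0) ltnS.
apply/bigmax_leqP => k _; case: ifP => // hk.
by rewrite -ltnS prednK // ltnNge; apply: contra noK => /has_dpath_le; apply.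
Qed.

Lemma leq_ffact_fact n k : n ^_ k * (n - k)`! <= n`!.
Proof. by have [/ffact_fact->|/ffact_small->] := leqP k n. Qed.

Local Open Scope ring_scope.

Section Probability.
Variable R : realType.

Lemma natr_ffact_le (s n k : nat) (dl : R) : 0 <= dl -> dl <= 1 ->
  s%:R <= dl * n%:R -> (s ^_ k)%:R <= dl ^+ k * (n ^_ k)%:R.
Proof.
move=> dl0 dl1 sn; have sn' : (s <= n)%N.
  by rewrite -(ler_nat R) (le_trans sn) // ler_piMl.
elim: k => [|k IHk]; first by rewrite !ffactn0 expr0 mul1r.
rewrite !ffactnSr !natrM exprSr mulrACA ler_pM //.
have [ks|/ltnW sk] := leqP k s; last by rewrite (eqP sk) mulr_ge0.
by rewrite natrB // natrB ?(leq_trans ks) // mulrBr lerB // ler_piMl.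
Qed.

Lemma natr_bin_fact_le (s n k : nat) (dl : R) : 0 <= dl -> dl <= 1 ->
  s%:R <= dl * n%:R -> ('C(s, k) * k`! * (n - k)`!)%:R <= dl ^+ k * n`!%:R.
Proof.
move=> dl0 dl1 sn; rewrite bin_ffact natrM.
apply: le_trans (ler_wpM2r (ler0n _ _) (natr_ffact_le k dl0 dl1 sn)) _.
by rewrite -mulrA -natrM ler_wpM2l ?exprn_ge0 // ler_nat leq_ffact_fact.
Qed.

Lemma card_ord_natr_le n (x : R) : 0 <= x ->
  #|[set p : 'I_n | p.+1%:R <= x]|%:R <= x.
Proof.
move=> x0; apply: le_trans (_ : (Num.truncn x)%:R <= x); last by rewrite truncn_le.
rewrite ler_nat cardE -(size_map val) -(size_iota 0 (Num.truncn x)).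
apply: uniq_leq_size; first by rewrite map_inj_uniq ?enum_uniq //; exact: val_inj.
by move=> m /mapP[p + ->]; rewrite mem_enum inE mem_iota /= truncn_gt_nat.
Qed.

Lemma prob_longest_dpath_ge n d K (e : rel 'I_n) (dl : R) : max_degree_le e d ->
  (0 < K)%N -> 0 < dl -> dl <= 1 ->
  prob_perm R (fun pi => (K <= longest_dpath e pi (delta_prefix pi dl))%N)
    <= n%:R * (d%:R * dl) ^+ K / K`!%:R.
Proof.
move=> de K0 dl0 dl1; set S := [set p : 'I_n | p.+1%:R <= dl * n%:R].
have count : (#|[set pi | K <= longest_dpath e pi (delta_prefix pi dl)]|
    <= n * d ^ K * 'C(#|S|, K.+1) * (n - K.+1)`!)%N.
  apply: leq_trans (card_has_dpath S K de); apply: subset_leq_card.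
  apply/subsetP => pi; rewrite !inE => /(has_dpath_longest K0).
  by congr (has_dpath _ _ _ _); apply/setP => v; rewrite !inE.
have binom := natr_bin_fact_le K.+1 (ltW dl0) dl1
  (card_ord_natr_le n (mulr_ge0 (ltW dl0) (ler0n R n))).
rewrite /prob_perm card_Sn ler_pdivrMr ?ltr0n ?fact_gt0 // mulrAC.
rewrite ler_pdivlMr ?ltr0n ?fact_gt0 //.
apply: le_trans (_ : (n * d ^ K * ('C(#|S|, K.+1) * K.+1`! * (n - K.+1)`!))%:R <= _).
  rewrite -natrM ler_nat; have := count; rewrite factS; nia.
rewrite natrM natrM natrX exprMn -!mulrA ler_wpM2l // ler_wpM2l ?exprn_ge0 //.
by apply: le_trans binom _; rewrite ler_wpM2r // exprSr ler_piMr // exprn_ge0 // ltW.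
Qed.

Lemma prob_perm_ge_complement n (P Q : pred {perm 'I_n}) :
  (forall pi, P pi || Q pi) -> 1 - prob_perm R Q <= prob_perm R P.
Proof.
move=> PQ; rewrite /prob_perm lerBlDr -mulrDl ler_pdivlMr; last first.
  by rewrite ltr0n card_Sn fact_gt0.
rewrite mul1r -natrD ler_nat -cardsT (leq_trans _ (leq_card_setU _ _).1) //.
by apply: subset_leq_card; apply/subsetP => pi _; rewrite !inE.
Qed.

Lemma longest_dpath_whp n d (e : rel 'I_n) (dl X b : R) : max_degree_le e d ->
  0 < dl -> dl <= 1 -> 0 <= X ->
  (forall K, (0 < K)%N -> X < K%:R -> n%:R * (d%:R * dl) ^+ K / K`!%:R <= b) ->
  1 - b <= prob_perm R (fun pi => (longest_dpath e pi (delta_prefix pi dl))%:R <= X).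
Proof.
move=> de dl0 dl1 X0 tail; set K := (Num.truncn X).+1.
apply: le_trans (prob_perm_ge_complement
  (Q := fun pi => K <= longest_dpath e pi (delta_prefix pi dl))%N _).
  rewrite lerB // (le_trans (prob_longest_dpath_ge de (ltn0Sn _) dl0 dl1)) //.
  by rewrite tail ?truncnS_gt.
move=> pi; rewrite orbC; case: leqP => //= lK.
have tX : (Num.truncn X)%:R <= X by rewrite truncn_le.
by rewrite (le_trans _ tX) ?ler_nat.
Qed.
End Probability.

Section Estimates.
Variable R : realType.

(* [k^k / k! <= e^k] is one term of the exponential series at [k]. *)
Lemma pow_div_fact_le (x : R) k : 0 <= x -> (0 < k)%N ->
  x ^+ k / k`!%:R <= (expR 1 * x / k%:R) ^+ k.
Proof.
move=> x0 k0; have kp : 0 < k%:R :> R by rewrite ltr0n.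
have fp : 0 < k`!%:R :> R by rewrite ltr0n fact_gt0.
have fk : k%:R ^+ k / k`!%:R <= expR 1 ^+ k :> R.
  rewrite -expRM_natr mul1r; move: k0 kp fp; case: k => // k _ kp fp.
  by apply: le_trans (expR_ge1Dxn k (ler0n _ _)); rewrite lerDr.
have -> : x ^+ k / k`!%:R = x ^+ k * (k%:R ^+ k / k`!%:R) / k%:R ^+ k.
  by field; rewrite !gt_eqF // exprn_gt0.
rewrite expr_div_n exprMn ler_wpM2r ?invr_ge0 ?exprn_ge0 //.
by rewrite mulrC ler_wpM2r ?exprn_ge0.
Qed.

Lemma ln_le_half (y : R) : 0 < y -> ln y <= y / 2.
Proof.
move=> y0; have ln2 : ln 2 <= 1 :> R.
  rewrite -[leRHS](expRK 1) ler_ln ?posrE ?expR_gt0 //.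
  by apply: le_trans (expR_ge1Dx 1); lra.
have := @le_ln1Dx R (y / 2 - 1); rewrite addrCA subrr addr0.
rewrite ln_div ?posrE ?divr_gt0 //; lra.
Qed.

Lemma tail_bound_log K (L D C1 c : R) : (0 < K)%N -> 0 <= L -> 0 <= D ->
  0 <= C1 -> 0 <= c -> D <= C1 * L -> (expR 2 * C1 + 1 + c) * L < K%:R ->
  expR L * D ^+ K / K`!%:R <= expR (- c * L).
Proof.
move=> K0 L0 D0 C10 c0 DL hK; have kp : 0 < K%:R :> R by rewrite ltr0n.
have ratio : expR 1 * D / K%:R <= expR (-1).
  rewrite ler_pdivrMr //; apply: le_trans (_ : expR 1 * (C1 * L) <= _).
    by rewrite ler_wpM2l ?expR_ge0.
  have -> : expR 1 = expR (-1) * expR 2 :> R by rewrite -expRD; congr expR; lra.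
  rewrite -mulrA ler_wpM2l ?expR_ge0 // mulrA (le_trans _ (ltW hK)) //.
  by rewrite ler_wpM2r //; lra.
have powK : (expR 1 * D / K%:R) ^+ K <= expR (- K%:R).
  rewrite -mulN1r expRM_natr; apply: lerXn2r ratio; rewrite nnegrE ?expR_ge0 //.
  by rewrite divr_ge0 ?mulr_ge0 ?expR_ge0 ?ler0n.
rewrite -mulrA (le_trans (ler_wpM2l (expR_ge0 _) (le_trans (pow_div_fact_le D0 K0) powK))) //.
rewrite -expRD ler_expR; move: hK; rewrite !mulrDl mulNr mul1r.
have : 0 <= expR 2 * C1 * L by rewrite !mulr_ge0 ?expR_ge0.
by move: (expR 2 * C1 * L) (c * L) => P Q; lra.
Qed.

(* With [A := C L / ln L], [ln A >= 1 + ln L / 2] since [ln C >= 1] and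
   [ln (ln L) <= ln L / 2]; hence [A (ln A - 1) >= C L / 2]. *)
Lemma loglog_threshold (L c k : R) : 1 < L -> 0 <= c ->
  (expR 1 + 2 + 2 * c) * L / ln L <= k -> (1 + c) * L <= k * (ln k - 1).
Proof.
move=> L1 c0; set C := expR 1 + 2 + 2 * c; set Y := ln L; set A := C * L / Y => Ak.
have Y0 : 0 < Y by rewrite ln_gt0.
have e0 := expR_gt0 (1 : R).
have C0 : 0 < C by rewrite /C; lra.
have A0 : 0 < A by rewrite /A divr_gt0 ?mulr_gt0 //; lra.
have lnC : 1 <= ln C by rewrite -[leLHS](expRK 1) ler_ln ?posrE // /C; lra.
have lnA : 1 + Y / 2 <= ln A.
  rewrite /A ln_div ?posrE ?mulr_gt0 ?lnM ?posrE // -/Y; try lra.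
  by have := ln_le_half Y0; lra.
have lnAk : ln A <= ln k by rewrite ler_ln ?posrE // (lt_le_trans A0).
apply: le_trans (_ : A * (ln A - 1) <= _).
  apply: le_trans (_ : A * (Y / 2) <= _); last by apply: ler_wpM2l; [exact: ltW | lra].
  have -> : A * (Y / 2) = C * L / 2 by rewrite /A; field; rewrite gt_eqF.
  by rewrite mulrAC; apply: ler_wpM2r; [lra | rewrite /C; lra].
apply: le_trans (_ : k * (ln A - 1) <= _); first by apply: ler_wpM2r; lra.
by apply: ler_wpM2l; [exact: le_trans (ltW A0) Ak | lra].
Qed.

Lemma tail_bound_loglog K (L D c : R) : (0 < K)%N -> 1 < L -> 0 <= D -> D <= 1 ->
  0 <= c -> (expR 1 + 2 + 2 * c) * L / ln L < K%:R ->
  expR L * D ^+ K / K`!%:R <= expR (- c * L).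
Proof.
move=> K0 L1 D0 D1 c0 hK; have kp : 0 < K%:R :> R by rewrite ltr0n.
have powK : (expR 1 * D / K%:R) ^+ K <= expR (K%:R * (1 - ln K%:R)).
  rewrite expRM_natl expRD expRN lnK ?posrE //; apply: lerXn2r.
  - by rewrite nnegrE divr_ge0 ?mulr_ge0 ?expR_ge0.
  - by rewrite nnegrE mulr_ge0 ?invr_ge0 ?expR_ge0 ?ler0n.
  - by rewrite ler_wpM2r ?invr_ge0 ?ler0n // ler_piMr ?expR_ge0.
rewrite -mulrA (le_trans (ler_wpM2l (expR_ge0 _) (le_trans (pow_div_fact_le D0 K0) powK))) //.
rewrite -expRD ler_expR; have := loglog_threshold L1 c0 (ltW hK).
by move: (ln K%:R) => lk; rewrite mulrBr mulr1 mulrDl mul1r mulNr; lra.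
Qed.
End Estimates.

Theorem corollary4 (R : realType) :
  (forall C1 c : R, 0 < C1 -> 0 < c ->
    exists (C : R) (N : nat), forall n : nat, (N <= n)%N ->
    forall (d : nat) (e : rel 'I_n), (0 < d)%N ->
      simple_graph e -> max_degree_le e d ->
    forall delta : R, 0 < delta -> delta <= 1 ->
      delta <= C1 * ln (n%:R : R) / d%:R ->
      1 - (n%:R : R) `^ (- c) <=
        prob_perm R (fun pi : {perm 'I_n} =>
          (longest_dpath e pi (delta_prefix pi delta))%:R <= C * ln (n%:R : R)))
  /\
  (forall c : R, 0 < c ->
    exists (C : R) (N : nat), forall n : nat, (N <= n)%N ->
    forall (d : nat) (e : rel 'I_n), (0 < d)%N ->
      simple_graph e -> max_degree_le e d ->
    forall delta : R, 0 < delta -> delta <= 1 ->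
      delta <= 1 / d%:R ->
      1 - (n%:R : R) `^ (- c) <=
        prob_perm R (fun pi : {perm 'I_n} =>
          (longest_dpath e pi (delta_prefix pi delta))%:R
            <= C * ln (n%:R : R) / ln (ln (n%:R : R)))).
Proof.
split=> [C1 c C10 c0 | c c0].
- exists (expR 2 * C1 + 1 + c), 1%N => n n0 d e d0 _ de dl dl0 dl1 dlC1.
  have L0 : 0 <= ln (n%:R : R) by rewrite ln_ge0 ?ler1n.
  have e2 : 0 <= expR 2 * C1 by rewrite mulr_ge0 ?expR_ge0 ?ltW.
  rewrite /powR pnatr_eq0 gtn_eqF //; apply: longest_dpath_whp => //.
    by rewrite mulr_ge0 //; lra.
  move=> K K0 XK; rewrite -[n%:R in leLHS]lnK ?posrE ?ltr0n //.
  apply: tail_bound_log K0 L0 _ (ltW C10) (ltW c0) _ XK.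
    by rewrite mulr_ge0 // ltW.
  by move: dlC1; rewrite ler_pdivlMr ?ltr0n // mulrC.
- exists (expR 1 + 2 + 2 * c), (Num.truncn (expR (1 : R))).+1.
  move=> n nN d e d0 _ de dl dl0 dl1 dld; have e0 := expR_gt0 (1 : R).
  have n0 : (0 < n)%N by apply: leq_trans nN.
  have L1 : 1 < ln (n%:R : R).
    by rewrite -ltr_expR lnK ?posrE ?ltr0n // -truncn_lt_nat ?expR_ge0.
  rewrite /powR pnatr_eq0 gtn_eqF //; apply: longest_dpath_whp => //.
    by rewrite divr_ge0 ?mulr_ge0 ?(ltW (ln_gt0 L1)) //; lra.
  move=> K K0 XK; rewrite -[n%:R in leLHS]lnK ?posrE ?ltr0n //.
  apply: tail_bound_loglog K0 L1 _ _ (ltW c0) XK; first by rewrite mulr_ge0 // ltW.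
  by move: dld; rewrite ler_pdivlMr ?ltr0n // mulrC.
Qed.
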